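(* Let $\Omega$ be the closure of a bounded domain in $\mathbb{R}^d$, let $X$ be a Banach space of functions on $\Omega$ with $C(\Omega)\subset X$ and $\|g\|_X\le C_X\|g\|_{C(\Omega)}$ for all $g\in C(\Omega)$, and let $K$ be a compact subset of $C(\Omega)$. Let ${\bf x}=(x_1,\dots,x_m)$ with $x_i\in\Omega$, let $f\in K$ and $w:=\lambda_{\bf x}(f)$. If $\varepsilon>0$ and $g_\varepsilon\in C(\Omega)$ satisfies $\|w-\lambda_{\bf x}(g_\varepsilon)\|\le\varepsilon$ and $\operatorname{dist}(g_\varepsilon,K)_{C(\Omega)}\le\varepsilon$, then $$\|f-g_\varepsilon\|_X\le C_X\varepsilon+2R(K(w,2\varepsilon))_X .$$
   Context: $\lambda_{\bf x}(g):=(g(x_1),\dots,g(x_m))$ for $g\in C(\Omega)$; on $\mathbb{R}^m$, $\|v\|:=\big[\frac1m\sum_{j=1}^m|v_j|^2\big]^{1/2}$. $\operatorname{dist}(g,K)_{C(\Omega)}:=\inf_{h\in K}\|g-h\|_{C(\Omega)}$ (sup norm). $K_{w'}:=\{h\in K:\lambda_{\bf x}(h)=w'\}$, $K(w,\varepsilon):=\bigcup_{w'\in\mathbb{R}^m,\ \|w'-w\|\le\varepsilon}K_{w'}$. For $S\subset X$, $R(S)_X:=\inf\{r:\ S\subset B(z,r)_X\text{ for some }z\in X\}$ (Chebyshev radius in $X$). *)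

From HB Require Import structures.
From mathcomp Require Import all_boot all_order all_algebra.
From mathcomp Require Import all_classical all_reals all_analysis.
Set Implicit Arguments. Unset Strict Implicit. Unset Printing Implicit Defensive.
Import Order.TTheory GRing.Theory Num.Theory.
Import numFieldNormedType.Exports.
Local Open Scope classical_set_scope.
Local Open Scope ring_scope.

Definition closure_of_bounded_domain {R : realType} {d : nat}
  (Om : set 'rV[R]_d) : Prop :=
  exists D : set 'rV[R]_d,
    [/\ open D, connected D, D !=set0, bounded_set D & Om = closure D].

(* g in C(Omega): continuous on Omega (values outside Omega are irrelevant) *)
Definition CO {R : realType} {d : nat} (Om : set 'rV[R]_d)
  (g : 'rV[R]_d -> R) : Prop := {within Om, continuous g}.

Definition supnorm {R : realType} {d : nat} (Om : set 'rV[R]_d)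
  (g : 'rV[R]_d -> R) : R := sup [set `|g x| | x in Om].

Definition lambda {R : realType} {d m : nat} (x : 'I_m -> 'rV[R]_d)
  (g : 'rV[R]_d -> R) : 'I_m -> R := fun j => g (x j).

Definition mnorm {R : realType} {m : nat} (v : 'I_m -> R) : R :=
  Num.sqrt (m%:R^-1 * \sum_(j < m) `|v j| ^+ 2).

Definition distC {R : realType} {d : nat} (Om : set 'rV[R]_d)
  (g : 'rV[R]_d -> R) (K : set ('rV[R]_d -> R)) : R :=
  inf [set supnorm Om (fun y => g y - h y) | h in K].

Definition Kweps {R : realType} {d m : nat} (x : 'I_m -> 'rV[R]_d)
  (K : set ('rV[R]_d -> R)) (w : 'I_m -> R) (eps : R) : set ('rV[R]_d -> R) :=
  [set h | K h /\ exists w' : 'I_m -> R,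
      mnorm (fun j => w' j - w j) <= eps /\ lambda x h = w'].

(* Chebyshev radius in X (balls taken closed; the infimum is the same) *)
Definition chebR {R : realType} {X : normedModType R} (S : set X) : R :=
  inf [set r : R | exists z : X, S `<=` [set y | `|y - z| <= r]].

(* Since K is compact in the uniform topology, the sup-distance from g to K is
   attained at some h in K, so |g - h| <= eps on Om.  At the data points this
   puts lambda_x(h) within 2 eps of w = lambda_x(f), because
   (a + b)^2 <= 2 a^2 + 2 b^2; hence f and h both lie in K(w, 2 eps), and two
   points of a set are at distance at most twice its Chebyshev radius.  The
   remaining term is ||h - g||_X <= C_X ||h - g||_C(Om) <= C_X eps. *)

From HB Require Import structures.
From mathcomp Require Import all_boot all_order all_algebra.
From mathcomp Require Import all_classical all_reals all_analysis.
From mathcomp Require Import lra.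
Import Order.TTheory GRing.Theory Num.Theory.
Import numFieldNormedType.Exports.
Local Open Scope classical_set_scope.
Local Open Scope ring_scope.

(* Boundedness matters: for an unbounded S the infimum defining chebR is taken
   over the empty set and evaluates to 0. *)
Lemma norm_sub_le_2chebR {R : realType} {X : normedModType R} {S : set X} {a b : X} :
  bounded_set S -> S a -> S b -> `|a - b| <= 2 * chebR S.
Proof.
move=> [M [_ HM]] Sa Sb; rewrite -ler_pdivrMl //; apply: lb_le_inf.
  exists (M + 1), 0 => y Sy /=; rewrite subr0.
  by apply: (HM (M + 1)) => //; rewrite ltrDl.
move=> r [z Sz]; have /= za := Sz _ Sa; have /= zb := Sz _ Sb.
have := ler_distD z a b; rewrite (distrC z b) (mulrC 2^-1) ler_pdivrMr //; lra.
Qed.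

Section MeanSquareNorm.
Context {R : realType} {m : nat}.
Implicit Types (v w : 'I_m -> R) (e : R).

Lemma mnorm_ge0 v : 0 <= mnorm v.
Proof. exact: sqrtr_ge0. Qed.

Lemma mnorm_sqr v : mnorm v ^+ 2 = m%:R^-1 * \sum_(j < m) `|v j| ^+ 2.
Proof.
by rewrite sqr_sqrtr // mulr_ge0 ?invr_ge0 // sumr_ge0 // => j _; rewrite exprn_ge0.
Qed.

Lemma mnormN v : mnorm (fun j => - v j) = mnorm v.
Proof. by rewrite /mnorm; under eq_bigr do rewrite normrN. Qed.

Lemma mnorm_le_max v e : 0 <= e -> (forall j, `|v j| <= e) -> mnorm v <= e.
Proof.
move=> e0 ve; rewrite -(ler_pXn2r (_ : 0 < 2)%N) ?nnegrE ?mnorm_ge0 // mnorm_sqr.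
case: m v ve => [|n] v ve; first by rewrite big_ord0 mulr0 exprn_ge0.
rewrite ler_pdivrMl ?ltr0n //.
apply: le_trans (ler_sum _ (fun j _ => lerXn2r 2 _ _ (ve j))) _; rewrite ?nnegrE //.
by rewrite sumr_const card_ord mulr_natl.
Qed.

Lemma normD_sqr_le (a b : R) : `|a + b| ^+ 2 <= 2 * `|a| ^+ 2 + 2 * `|b| ^+ 2.
Proof. rewrite !real_normK ?num_real //; have := sqr_ge0 (a - b); nra. Qed.

Lemma mnormD_sqr_le v w :
  mnorm (fun j => v j + w j) ^+ 2 <= 2 * mnorm v ^+ 2 + 2 * mnorm w ^+ 2.
Proof.
rewrite !mnorm_sqr mulrCA (mulrCA 2) -mulrDr ler_wpM2l ?invr_ge0 //.
rewrite !mulr_sumr -big_split ler_sum // => j _; exact: normD_sqr_le.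
Qed.

Lemma mnormD_le_double v w e : mnorm v <= e -> mnorm w <= e ->
  mnorm (fun j => v j + w j) <= 2 * e.
Proof.
move=> ve we; have e0 := le_trans (mnorm_ge0 v) ve.
rewrite -(ler_pXn2r (_ : 0 < 2)%N) ?nnegrE ?mnorm_ge0 ?mulr_ge0 //.
apply: le_trans (mnormD_sqr_le v w) _.
have := lerXn2r 2 (mnorm_ge0 v) e0 ve; have := lerXn2r 2 (mnorm_ge0 w) e0 we.
nra.
Qed.

End MeanSquareNorm.

Lemma closure_bounded_domain_compact {R : realType} {d : nat} {Om : set 'rV[R]_d} :
  closure_of_bounded_domain Om -> compact Om.
Proof.
case=> D [_ _ _ [M [Mr HM]] ->]; apply: bounded_closed_compact; last exact: closed_closure.
exists M; split => // r /HM DB.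
have DB' : D `<=` closed_ball_ Num.norm 0 r by move=> y /DB; rewrite /closed_ball_ /= sub0r normrN.
move=> y /(closureS DB'); rewrite -(closure_id _).1; last exact: closed_closed_ball_.
by rewrite /closed_ball_ /= sub0r normrN.
Qed.

Lemma closure_bounded_domain_neq0 {R : realType} {d : nat} {Om : set 'rV[R]_d} :
  closure_of_bounded_domain Om -> Om !=set0.
Proof. by case=> D [_ _ [t Dt] _ ->]; exists t; exact: subset_closure. Qed.

Lemma compact_uniform_cluster {R : realType} {U : choiceType} {A : set U}
    {K : set (U -> R)} (u : nat -> U -> R) :
  @compact {uniform` A -> R} K -> (forall n, K (u n)) ->
  exists2 k, K k & forall e, 0 < e -> forall N, exists2 n, (N <= n)%N &
    forall t, A t -> `|k t - u n t| < e.
Proof.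
move=> cK Ku; pose v : nat -> {uniform` A -> R} := u.
have [k [Kk clk]] : exists k, K k /\ cluster (v @ \oo) k.
  by apply: cK; exists 0%N => // n _; exact: Ku.
exists k => // e e0 N.
have tailN : (v @ \oo) (v @` [set n | (N <= n)%N]) by exists N => // n /= Nn; exists n.
have ballk : nbhs (k : {uniform` A -> R})
    [set h : {uniform` A -> R} | forall t, A t -> `|k t - h t| < e].
  apply/uniform_nbhs; exists [set xy : R * R | ball xy.1 e xy.2]; split => //.
  by rewrite -entourage_ballE; exists e.
by have [_ [[n Nn <-] ?]] := clk _ _ tailN ballk; exists n.
Qed.

Section ContinuousOnCompact.
Context {R : realType} {d : nat} {Om : set 'rV[R]_d}.
Hypothesis cOm : compact Om.
Implicit Types (g h u : 'rV[R]_d -> R).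

Lemma CO_lincomb a {g h} : CO Om g -> CO Om h -> CO Om (fun y => a * g y + h y).
Proof.
move=> cg ch t; apply: (@continuousD _ _ (subspace Om) (fun y => a * g y) h t).
  by apply: (@continuousM _ (subspace Om) (fun=> a) g t); [exact: cst_continuous|exact: cg].
exact: ch.
Qed.

Lemma CO_sub {g h} : CO Om g -> CO Om h -> CO Om (fun y => g y - h y).
Proof.
move=> cg ch; have := CO_lincomb (-1) ch cg.
by congr CO; apply/funext => y; rewrite mulN1r addrC.
Qed.

Lemma CO_bounded {u} : CO Om u -> exists M, forall t, Om t -> `|u t| <= M.
Proof.
move=> cu; have [M [_ HM]] := compact_bounded (continuous_compact cu cOm).
by exists (M + 1) => t Ot; apply: (HM (M + 1)); [rewrite ltrDl | exists t].
Qed.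

Lemma supnorm_ge {u t} : CO Om u -> Om t -> `|u t| <= supnorm Om u.
Proof.
move=> /CO_bounded [M HM] Ot; apply: ub_le_sup; last by exists t.
by exists M => _ [s Os <-]; exact: HM.
Qed.

Lemma supnorm_le u c : Om !=set0 -> (forall t, Om t -> `|u t| <= c) ->
  supnorm Om u <= c.
Proof.
move=> [t Ot] uc; apply: ge_sup; first by exists `|u t|, t.
by move=> _ [s Os <-]; exact: uc.
Qed.

Lemma supnorm_ge0 u : CO Om u -> 0 <= supnorm Om u.
Proof.
move=> cu; have [->|/set0P [t Ot]] := eqVneq Om set0.
  by rewrite /supnorm image_set0 sup0.
exact: le_trans (normr_ge0 _) (supnorm_ge cu Ot).
Qed.

End ContinuousOnCompact.

Section CompactFamily.
Context {R : realType} {d : nat} {Om : set 'rV[R]_d} {K : set ('rV[R]_d -> R)}.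
Hypotheses (cOm : compact Om) (KC : K `<=` CO Om) (cK : @compact {uniform` Om -> R} K).

Lemma compact_uniform_bounded : exists M, forall k t, K k -> Om t -> `|k t| <= M.
Proof.
apply: contrapT => unbounded.
have /choice [p Hp] : forall n : nat, exists p : ('rV[R]_d -> R) * 'rV[R]_d,
    [/\ K p.1, Om p.2 & n%:R < `|p.1 p.2|].
  move=> n; apply: contrapT => small; apply: unbounded; exists n%:R => k t Kk Ot.
  by rewrite leNgt; apply/negP => lt; apply: small; exists (k, t).
have Kp n : K (p n).1 by case: (Hp n).
have [k Kk clk] := compact_uniform_cluster _ cK Kp.
have [Mk HMk] := CO_bounded cOm (KC _ Kk).
have [n Nn kpn] := clk 1 ltr01 (Num.Def.truncn (Mk + 1)).+1.
have [_ Otn big] := Hp n.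
have := ler_distD (k (p n).2) 0 ((p n).1 (p n).2); rewrite !sub0r !normrN.
have := kpn _ Otn; have := HMk _ Otn; have := truncnS_gt (Mk + 1).
have : ((Num.Def.truncn (Mk + 1)).+1%:R <= n%:R :> R) by rewrite ler_nat.
lra.
Qed.

Lemma distC_attained {g} : CO Om g -> K !=set0 ->
  exists2 h, K h & forall t, Om t -> `|g t - h t| <= distC Om g K.
Proof.
move=> cg [f Kf].
have infE : has_inf [set supnorm Om (fun y => g y - h y) | h in K].
  split; first by exists (supnorm Om (fun y => g y - f y)), f.
  by exists 0 => _ [h Kh <-]; exact/(supnorm_ge0 cOm)/CO_sub/KC.
have /choice [u Hu] : forall n : nat, exists h,
    K h /\ supnorm Om (fun y => g y - h y) < distC Om g K + n.+1%:R^-1.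
  move=> n; have n0 : 0 < n.+1%:R^-1 :> R by rewrite invr_gt0.
  by have [_ [h Kh <-] lt] := inf_adherent n0 infE; exists h.
have Ku n : K (u n) by case: (Hu n).
have [h Kh clh] := compact_uniform_cluster _ cK Ku.
exists h => // t Ot; apply/ler_addgt0Pr => e e0.
have [n Nn close] := clh (e / 2) (divr_gt0 e0 (ltr0Sn _ 1)) (Num.Def.truncn (2 / e)).
have ninv : n.+1%:R^-1 < e / 2.
  rewrite invf_plt ?posrE ?divr_gt0 // invf_div.
  by apply: lt_le_trans (truncnS_gt _) _; rewrite ler_nat.
have := supnorm_ge cOm (CO_sub cg (KC _ (Ku n))) Ot; have := (Hu n).2.
have := close _ Ot; have := ler_distD (u n t) (g t) (h t).
rewrite (distrC (u n t)); set I := n.+1%:R^-1 in ninv *; lra.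
Qed.

End CompactFamily.

Section BoundedEmbedding.
Context {R : realType} {d : nat} {Om : set 'rV[R]_d} {X : normedModType R}.
Context {iota : ('rV[R]_d -> R) -> X} {CX : R}.
Hypotheses (cOm : compact Om) (Om0 : Om !=set0).
Hypothesis iota_lin : forall (a : R) (g1 g2 : 'rV[R]_d -> R), CO Om g1 -> CO Om g2 ->
  iota (fun y => a * g1 y + g2 y) = a *: iota g1 + iota g2.
Hypothesis iota_bound : forall g1 : 'rV[R]_d -> R, CO Om g1 ->
  `|iota g1| <= CX * supnorm Om g1.

Lemma embedding_const_ge0 : 0 <= CX.
Proof.
have C1 : CO Om (fun=> 1 : R) by exact: cst_continuous.
have [t Ot] := Om0; have := supnorm_ge cOm C1 Ot; rewrite normr1 => s1.
have := le_trans (normr_ge0 _) (iota_bound _ C1).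
by rewrite pmulr_lge0 // (lt_le_trans ltr01 s1).
Qed.

Lemma embedding_norm_le {h e} : CO Om h -> (forall t, Om t -> `|h t| <= e) ->
  `|iota h| <= CX * e.
Proof.
move=> ch he; apply: le_trans (iota_bound _ ch) _.
by rewrite ler_wpM2l ?embedding_const_ge0 ?supnorm_le.
Qed.

Lemma embedding_dist_le {g h e} : CO Om g -> CO Om h ->
  (forall t, Om t -> `|g t - h t| <= e) -> `|iota g - iota h| <= CX * e.
Proof.
move=> cg ch ghe; rewrite addrC -scaleN1r -iota_lin //.
by apply: embedding_norm_le => [|t Ot]; [exact: CO_lincomb | rewrite mulN1r addrC ghe].
Qed.

End BoundedEmbedding.

Theorem proposition4p1 (R : realType) (d m : nat) (Om : set 'rV[R]_d)
  (X : completeNormedModType R) (iota : ('rV[R]_d -> R) -> X) (CX : R)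
  (K : set ('rV[R]_d -> R)) (x : 'I_m -> 'rV[R]_d) (f g : 'rV[R]_d -> R)
  (eps : R) :
  closure_of_bounded_domain Om ->
  (forall (a : R) (g1 g2 : 'rV[R]_d -> R), CO Om g1 -> CO Om g2 ->
     iota (fun y => a * g1 y + g2 y) = a *: iota g1 + iota g2) ->
  (forall g1 g2 : 'rV[R]_d -> R, CO Om g1 -> CO Om g2 ->
     iota g1 = iota g2 -> {in Om, g1 =1 g2}) ->
  (forall g1 : 'rV[R]_d -> R, CO Om g1 -> `|iota g1| <= CX * supnorm Om g1) ->
  K `<=` CO Om ->
  @compact {uniform` Om -> R} K ->
  (forall i, Om (x i)) ->
  K f ->
  0 < eps ->
  CO Om g ->
  mnorm (fun j => lambda x f j - lambda x g j) <= eps ->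
  distC Om g K <= eps ->
  `|iota f - iota g| <= CX * eps + 2 * chebR (iota @` Kweps x K (lambda x f) (2 * eps)).
Proof.
move=> hOm lin _ bnd KC cK xOm Kf eps0 Cg fg gK.
have cOm := closure_bounded_domain_compact hOm.
have Om0 := closure_bounded_domain_neq0 hOm.
have [M HM] := compact_uniform_bounded cOm KC cK.
have [h Kh gh] := distC_attained cOm KC cK Cg (ex_intro _ f Kf).
have {}gh t : Om t -> `|g t - h t| <= eps by move=> Ot; exact: le_trans (gh t Ot) gK.
set S := Kweps x K (lambda x f) (2 * eps).
have eps2 : 0 <= 2 * eps by rewrite mulr_ge0 ?ltW.
have Sf : S f.
  split=> //; exists (lambda x f); split=> //.
  by apply: mnorm_le_max => // j; rewrite subrr normr0.
have Sh : S h.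
  split=> //; exists (lambda x h); split=> //.
  rewrite (_ : (fun j => _) = fun j => (h (x j) - g (x j)) + - (lambda x f j - lambda x g j)).
    apply: mnormD_le_double; last by rewrite mnormN.
    by apply: mnorm_le_max => [|j]; [exact: ltW | rewrite distrC; exact/gh/xOm].
  by apply: funext => j; rewrite /lambda opprB addrA subrK.
have bS : bounded_set (iota @` S).
  exists (CX * M); split=> [|r lt _ [k [Kk _] <-]]; first exact: num_real.
  apply: le_trans (ltW lt); apply: (embedding_norm_le cOm Om0 bnd (KC _ Kk)) => t Ot.
  exact: HM.
have := norm_sub_le_2chebR bS (imageP _ Sf) (imageP _ Sh).
have hg : `|iota h - iota g| <= CX * eps.
  by apply: (embedding_dist_le cOm Om0 lin bnd (KC _ Kh) Cg) => t Ot; rewrite distrC gh.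
have := ler_distD (iota h) (iota f) (iota g); lra.
Qed.
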